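(* Let $\Lambda$ be a left-artinian ring, $\mathcal{C}=\mathrm{mod}(\Lambda)$, $\mathcal{S}$ a set of (isoclasses of) simple $\Lambda$-modules and $M\in\mathcal{C}$. If $t_{\mathcal{S}}(M)\neq0$ then $\ell\ell^{t_{\mathcal{S}}}(\Omega\, t_{\mathcal{S}}(M))\leq\ell\ell^{t_{\mathcal{S}}}({}_\Lambda\Lambda)-1$.
   Context: $\mathcal{C}$ is the category of finitely generated left $\Lambda$-modules; $\Omega(N)$ denotes the first syzygy of $N$, i.e. the kernel of the projective cover $P\to N$. For a set $\mathcal{S}$ of simple modules, $\mathcal{X}_{\mathcal{S}}$ is the class of modules with a finite filtration whose factors are isomorphic to modules in $\mathcal{S}$; $\mathcal{T}_{\mathcal{S}}=\{M:\mathrm{Hom}_\Lambda(M,X)=0\ \forall X\in\mathcal{X}_{\mathcal{S}}\}$; $t_{\mathcal{S}}(M)$ is the submodule generated by images of maps $T\to M$, $T\in\mathcal{T}_{\mathcal{S}}$. $\ell\ell^{t_{\mathcal{S}}}(M)=\min\{i\geq0:t_{\mathcal{S}}\circ(\mathrm{rad}\circ t_{\mathcal{S}})^i(M)=0\}$. *)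

(* Left modules over a (possibly noncommutative) ring R are
   MathComp's [lmodType R]; submodules are Prop-valued predicates on the
   ambient module. *)
From HB Require Import structures.
From mathcomp Require Import all_boot all_algebra.
Set Implicit Arguments. Unset Strict Implicit. Unset Printing Implicit Defensive.
Import GRing.Theory.
Local Open Scope ring_scope.

Section ModuleDefs.
Variable R : nzRingType.

Definition msub (M : lmodType R) (A B : M -> Prop) := forall x, A x -> B x.
Definition meq (M : lmodType R) (A B : M -> Prop) := forall x, A x <-> B x.
Definition mzero (M : lmodType R) (A : M -> Prop) := forall x, A x -> x = 0.

Definition submodule (M : lmodType R) (A : M -> Prop) :=
  A 0 /\ forall (a : R) (x y : M), A x -> A y -> A (a *: x + y).

Definition fin_gen (M : lmodType R) :=
  exists s : seq M, forall x : M, exists r : seq R,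
    size r = size s /\ x = \sum_(i < size s) r`_i *: s`_i.

Definition left_artinian :=
  forall I : nat -> R^o -> Prop, (forall n, submodule (I n)) ->
    (forall n, msub (I n.+1) (I n)) ->
    exists N, forall n, (N <= n)%N -> meq (I n) (I N).

Definition simple_module (M : lmodType R) :=
  (exists x : M, x != 0) /\
  forall A : M -> Prop, submodule A -> mzero A \/ (forall x, A x).

Definition linear_on (M N : lmodType R) (A : M -> Prop) (f : M -> N) :=
  forall (a : R) x y, A x -> A y -> f (a *: x + y) = a *: f x + f y.

(* B/A is isomorphic to Sm (A subset B submodules of M): a map linear on B,
   onto Sm, whose kernel on B is exactly A *)
Definition factor_iso (M : lmodType R) (B A : M -> Prop) (Sm : lmodType R) :=
  exists f : M -> Sm, [/\ linear_on B f,
    (forall s, exists2 x, B x & f x = s) &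
    (forall x, B x -> (f x = 0 <-> A x))].

Definition XS (S : lmodType R -> Prop) (X : lmodType R) :=
  exists (n : nat) (F : nat -> X -> Prop),
    [/\ forall i, submodule (F i),
        meq (F 0%N) (fun x => x = 0),
        meq (F n) (fun _ => True),
        forall i, msub (F i) (F i.+1) &
        forall i, (i < n)%N -> exists2 Sm, S Sm & factor_iso (F i.+1) (F i) Sm].

Definition TS (S : lmodType R -> Prop) (T : lmodType R) :=
  fin_gen T /\
  forall (X : lmodType R), XS S X -> forall (f : {linear T -> X}) x, f x = 0.

(* t_S applied to the submodule A of the ambient module M: the submodule
   generated by images of maps T -> A with T in T_S *)
Definition tS (S : lmodType R -> Prop) (M : lmodType R) (A : M -> Prop) : M -> Prop :=
  fun x => forall B : M -> Prop, submodule B ->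
    (forall (T : lmodType R) (f : {linear T -> M}), TS S T ->
       (forall y, A (f y)) -> forall y, B (f y)) -> B x.

Definition maximal_sub (M : lmodType R) (A L : M -> Prop) :=
  [/\ submodule L, msub L A, ~ msub A L &
      forall L' : M -> Prop, submodule L' -> msub L L' -> msub L' A ->
        meq L' L \/ meq L' A].

Definition rad (M : lmodType R) (A : M -> Prop) : M -> Prop :=
  fun x => A x /\ forall L, maximal_sub A L -> L x.

Fixpoint tS_iter (S : lmodType R -> Prop) (M : lmodType R) (A : M -> Prop) (i : nat)
  : M -> Prop :=
  match i with
  | 0 => tS S A
  | i'.+1 => tS S (rad (tS_iter S A i'))
  end.

Definition is_llt (S : lmodType R -> Prop) (M : lmodType R) (A : M -> Prop) (n : nat) :=
  mzero (tS_iter S A n) /\ forall i, (i < n)%N -> ~ mzero (tS_iter S A i).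

Definition projective (P : lmodType R) :=
  forall (X Y : lmodType R) (g : {linear X -> Y}) (f : {linear P -> Y}),
    (forall y, exists x, g x = y) ->
    exists h : {linear P -> X}, forall p, g (h p) = f p.

(* p : P -> M is a projective cover of the submodule A of M
   (P f.g. projective, image of p is A, kernel superfluous) *)
Definition proj_cover (P M : lmodType R) (A : M -> Prop) (p : {linear P -> M}) :=
  [/\ fin_gen P, projective P,
      meq (fun m => exists x, p x = m) A &
      forall L : P -> Prop, submodule L ->
        (forall x, exists2 k, p k = 0 & exists2 l, L l & x = k + l) ->
        forall x, L x].

End ModuleDefs.

(* Write [t] for [t_S] and [p : P -> t M] for the projective cover.  Every map from [P]
   to a module of [X_S] vanishes, because it would induce a nonzero map to a simple module
   in [S] killing the superfluous [ker p], hence factoring through [t M]; so [t P = P].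
   Superfluity also puts [ker p] inside [rad (t P)], whence
   [t (rad t)^i (ker p) <= t (rad t)^(i+1) P].  Since [P] is a direct summand of some
   [Λ^n], the right-hand side vanishes as soon as [t (rad t)^(i+1) Λ] does, giving
   [ll(ker p) <= ll(Λ) - 1]; and [t M <> 0] forces [ll(Λ) > 0].  Finally [ll(Λ)] is finite
   since [Λ] is left artinian: [rad N <= J N] for every module [N] (as [J] is a finite
   intersection of maximal left ideals) and the Jacobson radical [J] is nilpotent. *)

From Pilot Require Import Defs.
From HB Require Import structures.
From mathcomp Require Import all_boot all_algebra zify.
From mathcomp Require classical_sets.
From Stdlib Require Import Classical ClassicalEpsilon.
From Stdlib Require Import FunctionalExtensionality PropExtensionality.
Set Implicit Arguments. Unset Strict Implicit. Unset Printing Implicit Defensive.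
Import GRing.Theory.
Local Open Scope ring_scope.

Section Submodules.
Variables (R : nzRingType) (M : lmodType R).
Implicit Types (A B G : M -> Prop) (x y : M).

Lemma submod0 A : submodule A -> A 0.
Proof. by case. Qed.

Lemma submodD A x y : submodule A -> A x -> A y -> A (x + y).
Proof. by case=> _ H Ax Ay; have := H 1 x y Ax Ay; rewrite scale1r. Qed.

Lemma submodZ A a x : submodule A -> A x -> A (a *: x).
Proof. by case=> A0 H Ax; have := H a x 0 Ax A0; rewrite addr0. Qed.

Lemma submodN A x : submodule A -> A x -> A (- x).
Proof. by move=> sA Ax; rewrite -scaleN1r; apply: submodZ. Qed.

Lemma submodB A x y : submodule A -> A x -> A y -> A (x - y).
Proof. by move=> sA Ax Ay; apply: submodD => //; apply: submodN. Qed.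

Lemma submod_sum A (I : Type) (r : seq I) (P : pred I) (F : I -> M) :
  submodule A -> (forall i, P i -> A (F i)) -> A (\sum_(i <- r | P i) F i).
Proof.
move=> sA AF; elim/big_rec: _ => [|i x Pi Ax]; first exact: submod0.
by apply: submodD => //; apply: AF.
Qed.

Lemma submodT : submodule (fun _ : M => True).
Proof. by []. Qed.

Lemma submod_eq0 : submodule (fun x : M => x = 0).
Proof. by split=> // a x y -> ->; rewrite scaler0 addr0. Qed.

Definition addsub A B : M -> Prop := fun x => exists a b, [/\ A a, B b & x = a + b].

Lemma submod_addsub A B : submodule A -> submodule B -> submodule (addsub A B).
Proof.
move=> sA sB; split; first by exists 0, 0; rewrite addr0; split=> //; apply: submod0.
move=> c x y [a [b [Aa Bb ->]]] [a' [b' [Aa' Bb' ->]]].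
exists (c *: a + a'), (c *: b + b'); split.
- by case: sA => _; apply.
- by case: sB => _; apply.
- by rewrite scalerDr addrACA.
Qed.

Lemma addsubl A B : submodule B -> msub A (addsub A B).
Proof. by move=> sB a Aa; exists a, 0; rewrite addr0; split=> //; apply: submod0. Qed.

Lemma addsubr A B : submodule A -> msub B (addsub A B).
Proof. by move=> sA b Bb; exists 0, b; rewrite add0r; split=> //; apply: submod0. Qed.

Definition span G : M -> Prop :=
  fun x => exists s : seq M, List.Forall G s /\ x = \sum_(g <- s) g.

Lemma span_gen G g : G g -> span G g.
Proof. by move=> Gg; exists [:: g]; rewrite big_seq1; split=> //; constructor. Qed.

Lemma span0 G : span G 0.
Proof. by exists [::]; rewrite big_nil. Qed.

Lemma spanD G x y : span G x -> span G y -> span G (x + y).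
Proof.
move=> [s [Gs ->]] [t [Gt ->]]; exists (s ++ t); rewrite big_cat; split=> //.
exact/List.Forall_app.
Qed.

Lemma submod_span G : (forall a g, G g -> G (a *: g)) -> submodule (span G).
Proof.
move=> GZ; split; first exact: span0.
move=> a x y [s [Gs ->]] Gy; apply: spanD => //.
exists (map ( *:%R a) s); rewrite big_map scaler_sumr; split=> //.
elim: s Gs => [|g s IH] Gs /=; first by constructor.
by inversion Gs; constructor; [apply: GZ|apply: IH].
Qed.

Lemma span_le G B : submodule B -> msub G B -> msub (span G) B.
Proof.
move=> sB GB x [s [Gs ->]]; elim: s Gs => [|g s IH] Gs.
  by rewrite big_nil; apply: submod0.
by inversion Gs; rewrite big_cons; apply: submodD => //; [apply: GB|apply: IH].
Qed.

End Submodules.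

Lemma span_additive (R : nzRingType) (M N : lmodType R) (G : M -> Prop)
    (G' : N -> Prop) (f : M -> N) :
  f 0 = 0 -> (forall x y, f (x + y) = f x + f y) ->
  (forall g, G g -> span G' (f g)) -> forall x, span G x -> span G' (f x).
Proof.
move=> f0 fD fG x [s [Gs ->]]; elim: s Gs => [|g s IH] Gs.
  by rewrite big_nil f0; apply: span0.
by inversion Gs; rewrite big_cons fD; apply: spanD; [apply: fG|apply: IH].
Qed.

Definition mklinear (R : nzRingType) (U V : lmodType R) (f : U -> V)
  (fP : forall a x y, f (a *: x + y) = a *: f x + f y) : {linear U -> V} :=
  HB.pack f (GRing.isLinear.Build R U V *:%R f fP).

Lemma submod_preim (R : nzRingType) (M N : lmodType R) (g : {linear M -> N})
    (B : N -> Prop) :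
  submodule B -> submodule (fun x => B (g x)).
Proof.
move=> [B0 BP]; split; first by rewrite linear0.
by move=> a x y Bx By; rewrite linearP; apply: BP.
Qed.

Lemma submod_ker (R : nzRingType) (M N : lmodType R) (g : {linear M -> N}) :
  submodule (fun x => g x = 0).
Proof. exact: submod_preim (submod_eq0 N). Qed.

Lemma submod_cap (R : nzRingType) (M : lmodType R) (A B : M -> Prop) :
  submodule A -> submodule B -> submodule (fun x => A x /\ B x).
Proof.
move=> [A0 HA] [B0 HB]; split=> // a x y [? ?] [? ?].
by split; [apply: HA|apply: HB].
Qed.

Section TorsionRadical.
Variables (R : nzRingType) (S : lmodType R -> Prop).

Lemma submod_tS (M : lmodType R) (A : M -> Prop) : submodule (tS S A).
Proof.
split; first by move=> B sB _; apply: submod0.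
by move=> a x y Hx Hy B sB H; case: (sB) => _; apply; [apply: Hx|apply: Hy].
Qed.

Lemma tS_subset (M : lmodType R) (A : M -> Prop) : submodule A -> msub (tS S A) A.
Proof. by move=> sA x; apply=> // T f _; apply. Qed.

Lemma tS_image (M T : lmodType R) (A : M -> Prop) (f : {linear T -> M}) y :
  TS S T -> (forall y, A (f y)) -> tS S A (f y).
Proof. by move=> TT fA B sB H; apply: H. Qed.

Lemma tS_mono (M : lmodType R) (A B : M -> Prop) : msub A B -> msub (tS S A) (tS S B).
Proof. by move=> AB x Hx C sC HC; apply: Hx => // T f TT fA; apply: HC => // y; apply: AB. Qed.

Lemma tS_linear (M N : lmodType R) (g : {linear M -> N})
    (A : M -> Prop) (B : N -> Prop) :
  (forall x, A x -> B (g x)) -> forall x, tS S A x -> tS S B (g x).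
Proof.
move=> AB x Hx C sC HC; apply: (Hx _ (submod_preim g sC)) => T f TT fA y.
exact: (HC T (g \o f) TT (fun y => AB _ (fA y)) y).
Qed.

Lemma rad_subset (M : lmodType R) (A : M -> Prop) : msub (Defs.rad A) A.
Proof. by move=> x []. Qed.

Lemma submod_rad (M : lmodType R) (A : M -> Prop) : submodule A -> submodule (Defs.rad A).
Proof.
move=> sA; split; first by split; [apply: submod0|move=> L [sL _ _ _]; apply: submod0].
move=> a x y [Ax Hx] [Ay Hy]; split; first by case: sA => _; apply.
by move=> L mL; case: (mL) => [[_ HL] _ _ _]; apply: HL; [apply: Hx|apply: Hy].
Qed.

Lemma maximal_sub_preim (M N : lmodType R) (g : {linear M -> N})
    (A : M -> Prop) (B L : N -> Prop) :
  submodule A -> submodule B -> (forall x, A x -> B (g x)) -> maximal_sub B L ->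
  ~ (forall x, A x -> L (g x)) -> maximal_sub A (fun x => A x /\ L (g x)).
Proof.
move=> sA sB AB [sL LB nBL maxL] nAL.
have [x0 nALx0] := not_all_ex_not _ _ nAL.
have [Ax0 nLx0] := imply_to_and _ _ nALx0.
split; [exact: submod_cap (submod_preim g sL)|by move=> x []|
  by move=> AL; apply: nLx0; case: (AL x0 Ax0)|].
move=> L' sL' KL' L'A.
pose L'' := fun y => exists l x, [/\ L l, L' x & y = l + g x].
have sL'' : submodule L''.
  split; first by exists 0, 0; rewrite linear0 addr0; split=> //; apply: submod0.
  move=> c _ _ [l [x [Ll L'x ->]]] [m [y [Lm L'y ->]]].
  exists (c *: l + m), (c *: x + y); split.
  + by case: sL => _; apply.
  + by case: sL' => _; apply.
  + by rewrite linearP scalerDr addrACA.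
have LL'' : msub L L''.
  by move=> l Ll; exists l, 0; rewrite linear0 addr0; split=> //; apply: submod0.
have L''B : msub L'' B.
  by move=> _ [l [x [Ll L'x ->]]]; apply: submodD => //; [apply: LB|apply: AB; apply: L'A].
case: (maxL L'' sL'' LL'' L''B) => [EL|EB].
- left=> u; split; last exact: KL'.
  move=> L'u; split; first exact: L'A.
  by apply/EL; exists 0, u; rewrite add0r; split=> //; apply: submod0.
- right=> u; split; first exact: L'A.
  move=> Au; have /EB [l [v [Ll L'v Eg]]] := AB u Au.
  have L'uv : L' (u - v).
    by apply: KL'; split; [apply: submodB => //; apply: L'A|rewrite linearB Eg addrK].
  by have := submodD sL' L'uv L'v; rewrite subrK.
Qed.

Lemma rad_linear (M N : lmodType R) (g : {linear M -> N})
    (A : M -> Prop) (B : N -> Prop) :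
  submodule A -> submodule B ->
  (forall x, A x -> B (g x)) -> forall x, Defs.rad A x -> Defs.rad B (g x).
Proof.
move=> sA sB AB x [Ax radx]; split=> [|L mL]; first exact: AB.
case: (classic (forall y, A y -> L (g y))) => [AL|nAL]; first exact: AL.
by case: (radx _ (maximal_sub_preim sA sB AB mL nAL)).
Qed.

Lemma rad_mono (M : lmodType R) (A B : M -> Prop) :
  submodule A -> submodule B -> msub A B -> msub (Defs.rad A) (Defs.rad B).
Proof. by move=> sA sB AB x; apply: (rad_linear (g := idfun)). Qed.

Lemma submod_tS_iter (M : lmodType R) (A : M -> Prop) i : submodule (tS_iter S A i).
Proof. by case: i => [|i] /=; apply: submod_tS. Qed.

Lemma tS_iter_linear (M N : lmodType R) (g : {linear M -> N})
    (A : M -> Prop) (B : N -> Prop) :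
  (forall x, A x -> B (g x)) ->
  forall i x, tS_iter S A i x -> tS_iter S B i (g x).
Proof.
move=> AB; elim=> [|i IH] x /=; first exact: tS_linear.
by apply: tS_linear; apply: rad_linear IH; apply: submod_tS_iter.
Qed.

End TorsionRadical.

Lemma zorn_submod_avoid (R : nzRingType) (M : lmodType R) (N C : M -> Prop) (y : M) :
  submodule C -> msub C N -> ~ C y ->
  exists K, [/\ submodule K, msub C K, msub K N, ~ K y &
    forall K', submodule K' -> msub K K' -> msub K' N -> ~ K' y -> msub K' K].
Proof.
move=> sC CN nCy.
pose good K := [/\ submodule K, msub C K, msub K N & ~ K y].
(* The empty predicate is added to make every chain, even the empty one, bounded. *)
pose P K := K = (fun _ : M => False) \/ good K.
have nonempty_good K x : P K -> K x -> good K by case=> [->|].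
have [A [PA maxA]] : exists A, P A /\ forall B, classical_sets.proper A B -> ~ P B.
  apply: classical_sets.Zorn_bigcup => F FP Ftot.
  case: (classic (exists K, F K /\ good K)) => [[K0 [FK0 gK0]]|nF]; last first.
    left; apply: functional_extensionality => x; apply: propositional_extensionality.
    split=> // -[K FK Kx]; apply: nF; exists K; split=> //.
    exact: nonempty_good (FP _ FK) Kx.
  right; split.
  - split; first by exists K0 => //; case: gK0 => [sK _ _ _]; apply: submod0.
    move=> a u v [K1 FK1 K1u] [K2 FK2 K2v].
    case: (Ftot _ _ FK1 FK2) => [S12|S21].
    + have [sK2 _ _ _] := nonempty_good _ _ (FP _ FK2) K2v.
      by exists K2 => //; case: sK2 => _; apply=> //; apply: S12.
    + have [sK1 _ _ _] := nonempty_good _ _ (FP _ FK1) K1u.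
      by exists K1 => //; case: sK1 => _; apply=> //; apply: S21.
  - by move=> x Cx; exists K0 => //; case: gK0 => _ CK0 _ _; apply: CK0.
  - by move=> x [K FK Kx]; have [_ _ KN _] := nonempty_good _ _ (FP _ FK) Kx; apply: KN.
  - by move=> [K FK Ky]; have [_ _ _ nKy] := nonempty_good _ _ (FP _ FK) Ky.
have [sA CA AN nAy] : good A.
  case: PA => // A0; exfalso; apply: (maxA C); last by right; split.
  by rewrite A0; split=> // H; apply: (H 0 (submod0 sC)).
exists A; split=> // K' sK' AK' K'N nK'y x K'x.
apply: NNPP => nAx; apply: (maxA K'); last by right; split=> // z /CA /AK'.
by split=> // H; apply: nAx; apply: H.
Qed.

Lemma ex_least_nat (Q : nat -> Prop) :
  (exists n, Q n) -> exists n, Q n /\ forall i, (i < n)%N -> ~ Q i.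
Proof.
move=> [n Qn]; elim/ltn_ind: n Qn => n IH Qn.
case: (classic (exists i, (i < n)%N /\ Q i)) => [[i [lin Qi]]|H]; first exact: IH Qi.
by exists n; split=> // i lin Qi; apply: H; exists i.
Qed.

Section Jacobson.
Variable R : nzRingType.
Implicit Types (L : R^o -> Prop) (r s y : R).

Definition jacobson : R^o -> Prop := Defs.rad (fun _ : R^o => True).

Definition max_lideal L := maximal_sub (fun _ : R^o => True) L.

Lemma submodMl L a x : submodule L -> L x -> L (a * x).
Proof. exact: (submodZ (M := R^o)). Qed.

Lemma lideal_submod L :
  L 0 -> (forall a x y, L x -> L y -> L (a * x + y)) -> submodule L.
Proof. by split. Qed.

Lemma submod_jacobson : submodule jacobson.
Proof. exact: submod_rad (submodT _). Qed.

Lemma jacobson_max_lideal L y : jacobson y -> max_lideal L -> L y.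
Proof. by case=> _ H mL; apply: H. Qed.

Lemma submod_max_lideal L : max_lideal L -> submodule L.
Proof. by case. Qed.

Lemma max_lideal_neq1 L : max_lideal L -> ~ L 1.
Proof.
by move=> [sL _ nTL _] L1; apply: nTL => r _; rewrite -[r]mulr1; apply: submodMl.
Qed.

Lemma max_lideal_comax L r : max_lideal L -> ~ L r -> exists l s, L l /\ 1 = l + s * r.
Proof.
move=> [sL _ nTL maxL] nLr.
pose Lr := fun z : R^o => exists l s, L l /\ z = l + s * r.
have sLr : submodule Lr.
  apply: lideal_submod; first by exists 0, 0; rewrite mul0r addr0; split=> //; apply: submod0.
  move=> a _ _ [l [s [Ll ->]]] [l' [s' [Ll' ->]]].
  exists (a * l + l'), (a * s + s'); split; first by case: sL => _; apply.
  by rewrite mulrDr mulrDl mulrA addrACA.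
have LLr : msub L Lr by move=> l Ll; exists l, 0; rewrite mul0r addr0.
case: (maxL Lr sLr LLr (fun _ _ => I)) => [EL|ET].
  by case: nLr; apply/EL; exists 0, 1; rewrite mul1r add0r; split=> //; apply: submod0.
have [l [s [Ll E]]] : Lr 1 by apply/ET.
by exists l, s.
Qed.

Lemma max_lideal_exists L : submodule L -> ~ L 1 -> exists L', max_lideal L' /\ msub L L'.
Proof.
move=> sL nL1.
have [K [sK LK _ nK1 maxK]] := zorn_submod_avoid sL (fun _ _ => I) nL1.
exists K; split=> //; split=> //; first by move=> H; apply: nK1; apply: H.
move=> L' sL' KL' _; case: (classic (L' 1)) => [L'1|nL'1].
  by right=> r; split=> // _; rewrite -[r]mulr1; apply: submodMl.
by left=> r; split; [apply: maxK|apply: KL'].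
Qed.

Lemma jacobson_unitl y : jacobson y -> exists u, u * (1 - y) = 1.
Proof.
move=> Jy; pose C := fun z : R^o => exists u, z = u * (1 - y).
have sC : submodule C.
  apply: lideal_submod; first by exists 0; rewrite mul0r.
  by move=> a _ _ [u ->] [v ->]; exists (a * u + v); rewrite mulrDl mulrA.
case: (classic (C 1)) => [[u Hu]|nC1]; first by exists u.
have [L [mL CL]] := max_lideal_exists sC nC1.
have L1y : L (1 - y) by apply: CL; exists 1; rewrite mul1r.
case: (max_lideal_neq1 mL).
by have := submodD (submod_max_lideal mL) L1y (jacobson_max_lideal Jy mL); rewrite subrK.
Qed.

Lemma max_lideal_colon L a : max_lideal L -> ~ L a -> max_lideal (fun r => L (r * a)).
Proof.
move=> mL nLa; have sL := submod_max_lideal mL.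
pose La := fun r : R^o => L (r * a).
have sLa : submodule La.
  apply: lideal_submod; first by rewrite /La mul0r; apply: submod0.
  by move=> b x z Lx Lz; rewrite /La mulrDl -mulrA; apply: submodD => //; apply: submodMl.
split=> //; first by move=> H; apply: nLa; rewrite -[a]mul1r; apply: H.
move=> L' sL' LaL' _.
case: (classic (msub L' La)) => [L'La|nL'La].
  by left=> r; split; [apply: L'La|apply: LaL'].
right=> s; split=> // _.
have [r nL'Lar] := not_all_ex_not _ _ nL'La.
have [L'r nLar] := imply_to_and _ _ nL'Lar.
have [l [s' [Ll E1]]] := max_lideal_comax mL nLar.
have [l0 [u [Ll0 E0]]] := max_lideal_comax mL nLa.
(* [u a] and [s' r a] are both [1] modulo [L], so [u - s' r] lies in [La] and [u] in [L'];
   then [s - s a u] lies in [La] for every [s]. *)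
have ua : u * a = 1 - l0 by rewrite E0 [l0 + _]addrC addrK.
have L'u : L' u.
  have : La (u - s' * r).
    rewrite /La mulrBl -mulrA ua.
    have -> : s' * (r * a) = 1 - l by rewrite E1 [l + _]addrC addrK.
    by rewrite opprB addrC subrKA; apply: submodB.
  by move=> /LaL' H1; have := submodD sL' H1 (submodMl s' sL' L'r); rewrite subrK.
have : La (s - s * a * u).
  rewrite /La (_ : (s - s * a * u) * a = (s * a) * (1 - u * a)); last first.
    by rewrite mulrBl mulrBr mulr1 !mulrA.
  by rewrite ua opprB addrC subrK; apply: submodMl.
by move=> /LaL' H1; have := submodD sL' H1 (submodMl (s * a) sL' L'u); rewrite subrK.
Qed.

Lemma jacobsonMr y a : jacobson y -> jacobson (y * a).
Proof.
move=> Jy; split=> // L mL.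
case: (classic (L a)) => [La|nLa]; first exact: submodMl (submod_max_lideal mL) La.
exact: (jacobson_max_lideal Jy (max_lideal_colon mL nLa)).
Qed.

Definition lprod (M : lmodType R) (A : R^o -> Prop) (N : M -> Prop) : M -> Prop :=
  span (fun x => exists a n, [/\ A a, N n & x = a *: n]).

Lemma submod_lprod (M : lmodType R) (A : R^o -> Prop) (N : M -> Prop) :
  (forall a b, A b -> A (a * b)) -> submodule (lprod A N).
Proof.
move=> AM; apply: submod_span => a _ [b [n [Ab Nn ->]]].
by exists (a * b), n; rewrite scalerA; split=> //; apply: AM.
Qed.

Lemma lprod_gen (M : lmodType R) (A : R^o -> Prop) (N : M -> Prop) a n :
  A a -> N n -> lprod A N (a *: n).
Proof. by move=> Aa Nn; apply: span_gen; exists a, n. Qed.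

Lemma lprod_subset (M : lmodType R) (A : R^o -> Prop) (N : M -> Prop) :
  submodule N -> msub (lprod A N) N.
Proof. by move=> sN; apply: span_le => // _ [a [n [_ Nn ->]]]; apply: submodZ. Qed.

Lemma lprodSr (M : lmodType R) (A : R^o -> Prop) (N N' : M -> Prop) :
  msub N N' -> msub (lprod A N) (lprod A N').
Proof.
move=> NN'; apply: (span_additive (f := id)) => // _ [a [n [Aa Nn ->]]].
by apply: lprod_gen => //; apply: NN'.
Qed.

Fixpoint jacobson_pow (m : nat) : R^o -> Prop :=
  if m is m'.+1 then lprod jacobson (jacobson_pow m') else fun _ => True.

Lemma submod_jacobson_pow m : submodule (jacobson_pow m).
Proof.
case: m => [|m] /=; first exact: submodT.
by apply: submod_lprod => a b; apply: submodMl submod_jacobson.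
Qed.

Lemma jacobson_powS_subset m : msub (jacobson_pow m.+1) (jacobson_pow m).
Proof. by elim: m => [|m IH] //=; apply: lprodSr. Qed.

Lemma jacobson_powS_jacobson m : msub (jacobson_pow m.+1) jacobson.
Proof.
apply: span_le; first exact: submod_jacobson.
by move=> _ [j [p [Jj _ ->]]]; apply: jacobsonMr.
Qed.

Lemma lprod_jacobson_pow (V : R^o -> Prop) :
  msub V (lprod jacobson V) -> forall m, msub V (lprod (jacobson_pow m) V).
Proof.
move=> VJV; elim=> [|m IH] v Vv; first by rewrite -[v]scale1r; apply: lprod_gen.
apply: (span_additive (f := id) _ _ _ (VJV v Vv)) => // _ [j [w [Jj Vw ->]]].
apply: (span_additive (f := fun t : R^o => (j * t : R^o)) _ _ _ (IH w Vw)).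
- by rewrite mulr0.
- by move=> a b; rewrite mulrDr.
move=> _ [p [w' [Jp Vw' ->]]]; apply: span_gen; exists (j * p), w'; split=> //.
  by rewrite -[_ * p]/(j *: p); apply: lprod_gen.
by rewrite /GRing.scale /= mulrA.
Qed.

Section AvoidingSubmodule.
Variables (M : lmodType R) (N K : M -> Prop) (y : M).
Hypotheses (sN : submodule N) (sK : submodule K) (JNK : msub (lprod jacobson N) K)
  (KN : msub K N) (nKy : ~ K y)
  (maxK : forall K', submodule K' -> msub K K' -> msub K' N -> ~ K' y -> msub K' K).

(* If [K + R e z] contains [y = k + r e z] then [r] is a unit modulo [L], so [e z] is
   recovered from [y] up to elements of [K]. *)
Lemma avoid_absorb L e z : max_lideal L -> (forall r, L r -> jacobson (r * e)) ->
  N z -> forall K', submodule K' -> msub K K' -> K' y -> K' (e *: z).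
Proof.
move=> mL LeJ Nz K' sK' KK' K'y.
case: (classic (K (e *: z))) => [Kez|nKez]; first exact: KK'.
pose Cz := fun w : M => exists r, w = r *: (e *: z).
have sCz : submodule Cz.
  split; first by exists 0; rewrite scale0r.
  by move=> a _ _ [r ->] [r' ->]; exists (a * r + r'); rewrite scalerA scalerDl.
have sKC := submod_addsub sK sCz.
have KCy : addsub K Cz y.
  apply: NNPP => nKCy; apply: nKez; apply: (maxK sKC (addsubl sCz)) => //.
    move=> _ [k [_ [Kk [r ->] ->]]]; apply: submodD => //; first exact: KN.
    by do 2!apply: submodZ => //.
  by apply: addsubr => //; exists 1; rewrite scale1r.
have [k [_ [Kk [r ->] Ey]]] := KCy.
have nLr : ~ L r.
  move=> Lr; apply: nKy; rewrite Ey; apply: submodD => //; apply: JNK.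
  by rewrite scalerA; apply: lprod_gen => //; apply: LeJ.
have [l [s [Ll E1]]] := max_lideal_comax mL nLr.
have -> : e *: z = (l * e) *: z + s *: (y - k).
  by rewrite Ey [k + _]addrC addrK !scalerA -scalerDl -mulrDl -E1 mul1r.
apply: submodD => //; first by apply: KK'; apply: JNK; apply: lprod_gen => //; apply: LeJ.
by apply: submodZ => //; apply: submodB => //; apply: KK'.
Qed.

End AvoidingSubmodule.

Section Artinian.
Hypothesis artR : left_artinian R.

Lemma artinian_minimal (F : (R^o -> Prop) -> Prop) :
  (forall K, F K -> submodule K) -> (exists K, F K) ->
  exists K, F K /\ forall K', F K' -> msub K' K -> msub K K'.
Proof.
move=> FS [K0 FK0]; apply: NNPP => noMin.
have step K : F K -> exists K', F K' /\ msub K' K /\ ~ msub K K'.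
  move=> FK; apply: NNPP => H; apply: noMin; exists K; split=> // K' FK' K'K.
  by apply: NNPP => nKK'; apply: H; exists K'.
pose nxt K := epsilon (inhabits (fun _ : R^o => True))
  (fun K' => F K' /\ msub K' K /\ ~ msub K K').
have nxtP K : F K -> F (nxt K) /\ msub (nxt K) K /\ ~ msub K (nxt K).
  by move=> FK; apply: epsilon_spec (step K FK).
pose I n := iter n nxt K0.
have FI n : F (I n) by elim: n => //= n IH; case: (nxtP _ IH).
have [N HN] := artR (fun n => FS _ (FI n)) (fun n => proj1 (proj2 (nxtP _ (FI n)))).
by case: (nxtP _ (FI N)) => _ [_]; apply=> x Ix; apply/(HN N.+1 (leqnSn N)).
Qed.

Definition lcap n (Lf : nat -> R^o -> Prop) : R^o -> Prop :=
  fun x => forall i, (i < n)%N -> Lf i x.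

Definition jacobson_cap n Lf :=
  (forall i, (i < n)%N -> max_lideal (Lf i)) /\ meq jacobson (lcap n Lf).

Lemma submod_lcap n Lf : (forall i, (i < n)%N -> max_lideal (Lf i)) -> submodule (lcap n Lf).
Proof.
move=> mL; split=> [i lin|a x y Hx Hy i lin]; first exact: submod0 (submod_max_lideal (mL i lin)).
by have [[_ sL] _ _ _] := mL i lin; apply: sL; [apply: Hx|apply: Hy].
Qed.

(* Among finite intersections of maximal left ideals, a minimal one is the Jacobson radical. *)
Lemma jacobson_finite_cap : exists n Lf, jacobson_cap n Lf.
Proof.
pose F K := exists n Lf, (forall i, (i < n)%N -> max_lideal (Lf i)) /\ meq K (lcap n Lf).
have FS K : F K -> submodule K.
  move=> [n [Lf [mL EK]]]; have [H0 H1] := submod_lcap mL; split; first exact/EK.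
  by move=> a x y Kx Ky; apply/EK; apply: H1; apply/EK.
have [K [[n [Lf [mL EK]]] minK]] : exists K, F K /\
    forall K', F K' -> msub K' K -> msub K K'.
  by apply: artinian_minimal => //; exists (fun _ => True), 0%N, (fun _ _ => True).
exists n, Lf; split=> // x; split.
  by move=> Jx i lin; apply: (jacobson_max_lideal Jx); apply: mL.
move=> /EK Kx; split=> // L mL'.
pose Lf' i := if (i < n)%N then Lf i else L.
have FKL : F (fun x => K x /\ L x).
  exists n.+1, Lf'; split.
    by move=> i _; rewrite /Lf'; case: ifP => [lin|_]; [apply: mL|].
  move=> y; split.
    move=> [/EK Ky Ly] i; rewrite ltnS leq_eqVlt /Lf'.
    by case: ltnP => [lin|_]; [rewrite orbT => _; apply: Ky|].
  move=> H; split; last by have := H n (ltnSn n); rewrite /Lf' ltnn.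
  by apply/EK => i lin; have := H i (ltnW lin); rewrite /Lf' lin.
by case: (minK _ FKL (fun y (H : K y /\ L y) => proj1 H) x Kx).
Qed.

Lemma jacobson_irredundant_cap : exists n Lf, jacobson_cap n Lf /\
  forall i, (i < n)%N -> exists a, (forall j, (j < n)%N -> j != i -> Lf j a) /\ ~ Lf i a.
Proof.
have [n0 [Lf0 J0]] := jacobson_finite_cap.
have [n [[Lf [mL EJ]] minn]] :=
  ex_least_nat (ex_intro (fun n => exists Lf, jacobson_cap n Lf) n0 (ex_intro _ Lf0 J0)).
exists n, Lf; split=> // i lin; apply: NNPP => irr.
apply: (minn n.-1); first by lia.
pose skip j := if (j < i)%N then j else j.+1.
have skip_lt j : (j < n.-1)%N -> (skip j < n)%N by rewrite /skip; case: ifP => _; lia.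
exists (fun j => Lf (skip j)); split=> [j jlt|x]; first exact: mL (skip_lt j jlt).
split=> [Jx j jlt|Hx]; first exact: jacobson_max_lideal Jx (mL _ (skip_lt j jlt)).
have other j : (j < n)%N -> j != i -> Lf j x.
  move=> jn ji; case: (ltnP j i) => [ji'|ij].
    by have := Hx j ltac:(lia); rewrite /skip ji'.
  have := Hx j.-1 ltac:(lia); rewrite /skip.
  by rewrite (_ : (j.-1 < i)%N = false) ?prednK //; lia.
apply/EJ => j jn; case: (eqVneq j i) => [->|ji]; last exact: other.
by apply: NNPP => nLx; apply: irr; exists x.
Qed.

Lemma jacobson_partition_unity : exists n Lf (e : nat -> R),
  [/\ forall i, (i < n)%N -> max_lideal (Lf i),
      forall i r, (i < n)%N -> Lf i r -> jacobson (r * e i) &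
      jacobson (1 - \sum_(i < n) e i)].
Proof.
have [n [Lf [[mL EJ] irr]]] := jacobson_irredundant_cap.
have ex_e i : exists e : R, (i < n)%N ->
    (forall j, (j < n)%N -> j != i -> Lf j e) /\ Lf i (1 - e).
  case: (ltnP i n) => [lin|]; last by exists 0.
  have [a [Lja nLia]] := irr i lin.
  have [l [s [Ll E]]] := max_lideal_comax (mL i lin) nLia.
  exists (s * a) => _; split; last by rewrite E addrK.
  by move=> j jn ji; apply: submodMl; [apply: submod_max_lideal; apply: mL|apply: Lja].
pose e i := epsilon (inhabits (0 : R)) (fun e : R => (i < n)%N ->
    (forall j, (j < n)%N -> j != i -> Lf j e) /\ Lf i (1 - e)).
have eP i : (i < n)%N -> (forall j, (j < n)%N -> j != i -> Lf j (e i)) /\ Lf i (1 - e i).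
  exact: epsilon_spec (ex_e i).
exists n, Lf, e; split=> [//|i r lin Lr|].
  apply/EJ => j jn; case: (eqVneq j i) => [->|ji].
    have sLi := submod_max_lideal (mL i lin).
    have := submodB sLi Lr (submodMl r sLi (proj2 (eP i lin))).
    by rewrite mulrBr mulr1 opprB addrC subrK.
  exact: submodMl (submod_max_lideal (mL j jn)) (proj1 (eP i lin) j jn ji).
apply/EJ => j jn; have sLj := submod_max_lideal (mL j jn).
rewrite (bigD1 (Ordinal jn)) //= opprD addrA.
apply: (submodB sLj (proj2 (eP j jn))).
apply: (@submod_sum R R^o (Lf j) _ (index_enum _) _ (fun i : 'I_n => e i) sLj) => k kj.
apply: (proj1 (eP k (ltn_ord k))) => //.
by move: kj; apply: contra => /eqP E; apply/eqP/val_inj.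
Qed.

(* Write [x = (1 - sum e_i) x + sum e_i x]; if [x] is not in [J N], some [y = e_i x] is
   not, and a submodule maximal among those avoiding [y] is a maximal submodule of [N]. *)
Lemma rad_subset_lprod (M : lmodType R) (N : M -> Prop) :
  submodule N -> msub (Defs.rad N) (lprod jacobson N).
Proof.
move=> sN x radx; have [n [Lf [e [mL LeJ Je]]]] := jacobson_partition_unity.
apply: NNPP => nJx.
have sJN : submodule (lprod jacobson N).
  by apply: submod_lprod => a b; apply: submodMl submod_jacobson.
have JNN := lprod_subset (A := jacobson) sN.
have dec (z : M) : z = (1 - \sum_(i < n) e i) *: z + \sum_(i < n) e i *: z.
  by rewrite scalerBl scale1r scaler_suml subrK.
have Nx : N x by case: radx.
have [i [lin nJy]] : exists i, (i < n)%N /\ ~ lprod jacobson N (e i *: x).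
  apply: NNPP => H; apply: nJx; rewrite (dec x); apply: submodD => //.
    exact: lprod_gen.
  apply: (submod_sum _ sJN) => k _; apply: NNPP => nJk; apply: H; exists k; split=> //.
have [K [sK JNK KN nKy maxK]] := zorn_submod_avoid sJN JNN nJy.
suff mK : maximal_sub N K by apply: nKy; apply: submodZ sK _; case: radx => _; apply.
split=> //; first by move=> H; apply: nKy; apply: H; apply: submodZ.
move=> K' sK' KK' K'N; case: (classic (K' (e i *: x))) => [K'y|nK'y].
  right=> z; split=> [|Nz]; first exact: K'N.
  rewrite (dec z); apply: submodD => //; first by apply: KK'; apply: JNK; apply: lprod_gen.
  apply: (submod_sum _ sK') => k _.
  have LkJ r : Lf k r -> jacobson (r * e k) by apply: LeJ.
  exact (avoid_absorb sN sK JNK KN nKy maxK (mL k (ltn_ord k)) LkJ Nz sK' KK' K'y).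
by left=> z; split; [apply: maxK|apply: KK'].
Qed.

(* A minimal left ideal [K] with [D K <> 0] is generated by any [x] with [D x <> 0]:
   then [x = d x] for some [d] in [J], and [1 - d] is left invertible. *)
Lemma lideal_idempotent_jacobson_eq0 (D : R^o -> Prop) :
  submodule D -> msub D jacobson -> msub D (lprod D D) -> mzero D.
Proof.
move=> sD DJ DDD d Dd; apply: NNPP => nd0.
pose F K := submodule K /\ exists d k, [/\ D d, K k & d * k != 0].
have [K [[sK [d0 [x [Dd0 Kx nz]]]] minK]] :
    exists K, F K /\ forall K', F K' -> msub K' K -> msub K K'.
  apply: artinian_minimal => [K []//|]; exists (fun _ => True); split; first exact: submodT.
  by exists d, 1; rewrite mulr1; split=> //; apply/eqP.
pose Dx := fun z : R^o => exists d, D d /\ z = d * x.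
have sDx : submodule Dx.
  apply: lideal_submod; first by exists 0; rewrite mul0r; split=> //; apply: submod0.
  move=> a _ _ [d1 [Dd1 ->]] [d2 [Dd2 ->]]; exists (a * d1 + d2); split.
    by case: sD => _; apply.
  by rewrite mulrDl mulrA.
have FDx : F Dx.
  split=> //; apply: NNPP => nFDx.
  suff : span (fun z : R^o => z = 0) (d0 * x).
    by move=> Hs; move/eqP: nz; apply; apply: span_le (submod_eq0 _) _ _ Hs.
  apply: (span_additive (f := fun t : R^o => (t * x : R^o)) _ _ _ (DDD d0 Dd0)).
  - by rewrite mul0r.
  - by move=> a b; rewrite mulrDl.
  move=> _ [p [w [Dp Dw ->]]]; apply: span_gen; apply: NNPP => nz'.
  apply: nFDx; exists p, (w * x); split=> //; first by exists w.
  by rewrite mulrA; apply/eqP.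
have [d1 [Dd1 Ex]] : Dx x by apply: minK => // _ [d1 [Dd1 ->]]; apply: submodMl.
have [u Hu] := jacobson_unitl (DJ _ Dd1).
move/eqP: nz; apply.
have -> : x = 0 by rewrite -[x]mul1r -Hu -mulrA mulrBl mul1r -Ex subrr mulr0.
by rewrite mulr0.
Qed.

Lemma jacobson_nilpotent : exists m, mzero (jacobson_pow m).
Proof.
have [m Jm] := artR (@submod_jacobson_pow) (@jacobson_powS_subset).
have JmS : msub (jacobson_pow m) (jacobson_pow m.+1) by move=> v /(Jm m.+1 (leqnSn m)).
exists m; apply: lideal_idempotent_jacobson_eq0.
- exact: submod_jacobson_pow.
- by move=> v /JmS; apply: jacobson_powS_jacobson.
- exact: lprod_jacobson_pow JmS m.
Qed.

Lemma tS_iter_regular_eq0 S : exists n, mzero (tS_iter S (fun _ : R^o => True) n).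
Proof.
pose I := tS_iter S (fun _ : R^o => True).
have sI i : submodule (I i) by apply: submod_tS_iter.
have [N IN] := artR sI (fun i x Ix => rad_subset (tS_subset (submod_rad (sI i)) Ix)).
have IJI : msub (I N) (lprod jacobson (I N)).
  move=> v /(IN N.+1 (leqnSn N)) /= Iv.
  exact: rad_subset_lprod (sI N) _ (tS_subset (submod_rad (sI N)) Iv).
have [m Jm] := jacobson_nilpotent.
exists N => v /(lprod_jacobson_pow IJI m) Jv; apply: span_le (submod_eq0 _) _ _ Jv.
by move=> _ [p [w [/Jm -> _ ->]]]; rewrite scale0r.
Qed.

End Artinian.
End Jacobson.

Section ProjectiveCover.
Variables (R : nzRingType) (S : lmodType R -> Prop).
Hypothesis simpleS : forall Sm, S Sm -> simple_module Sm.

Lemma XS_mem (Sm : lmodType R) : S Sm -> XS S Sm.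
Proof.
move=> SSm; exists 1%N, (fun i (v : Sm) => if i is 0%N then v = 0 else True); split.
- by case=> [|i]; [apply: submod_eq0|apply: submodT].
- by [].
- by [].
- by case=> [|i] v.
move=> [|i] // _; exists Sm => //; exists id; split=> //.
by move=> s; exists s.
Qed.

(* Take the first step of the filtration containing the image and project onto its factor. *)
Lemma XS_nonzero_map_simple (T X : lmodType R) (phi : {linear T -> X}) x :
  XS S X -> phi x != 0 -> exists (Sm : lmodType R) (psi : {linear T -> Sm}) x1, S Sm /\ psi x1 != 0.
Proof.
move=> [n [F [sF F0 Fn Fm Ffac]]] nz.
have FmS a b : (a <= b)%N -> msub (F a) (F b).
  elim: b => [|b IH]; first by rewrite leqn0 => /eqP ->.
  by rewrite leq_eqVlt => /orP [/eqP ->|ab] // y /(IH ab) /Fm.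
have [j1 [Fj1 minj]] := ex_least_nat (ex_intro (fun i => forall y, F i (phi y)) n
   (fun y => proj2 (Fn (phi y)) I)).
case: j1 Fj1 minj => [|j] Fj1 minj; first by move: nz; rewrite (proj1 (F0 _) (Fj1 x)) eqxx.
have [x1 nFx1] : exists x1, ~ F j (phi x1).
  by apply: NNPP => H; apply: (minj j (ltnSn j)) => y; apply: NNPP => ?; apply: H; exists y.
have jn : (j < n)%N.
  by rewrite ltnNge; apply/negP => nj; apply: nFx1; apply: (FmS _ _ nj); apply/Fn.
have [Sm SSm [g [gl _ gk]]] := Ffac j jn.
have psiP a u v : g (phi (a *: u + v)) = a *: g (phi u) + g (phi v).
  by rewrite linearP; apply: gl; apply: Fj1.
exists Sm, (mklinear psiP), x1; split=> //.
by apply/eqP => /(gk _ (Fj1 x1)).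
Qed.

Section Cover.
Variables (M P : lmodType R) (p : {linear P -> M}).
Hypothesis pc : proj_cover (tS S (fun _ : M => True)) p.

(* The image of [ker p] under a map to a simple module is [0] or everything;
   the latter contradicts the superfluity of [ker p]. *)
Lemma proj_cover_ker_simple (Sm : lmodType R) (psi : {linear P -> Sm}) x1 :
  simple_module Sm -> psi x1 != 0 -> forall w, p w = 0 -> psi w = 0.
Proof.
case: pc => _ _ _ sup [_ simp] psix1 w pw; apply: NNPP => nzw.
have sIm : submodule (fun s => exists2 w, p w = 0 & psi w = s).
  split; first by exists 0; rewrite ?linear0.
  move=> a _ _ [w1 pw1 <-] [w2 pw2 <-]; exists (a *: w1 + w2); last by rewrite linearP.
  by rewrite linearP pw1 pw2 scaler0 addr0.
case: (simp _ sIm) => [Z|All]; first by apply: nzw; apply: Z; exists w.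
move/eqP: psix1; apply; apply: (sup _ (submod_ker psi)) => y.
have [w1 pw1 Ew1] := All (psi y).
by exists w1 => //; exists (y - w1); [rewrite linearB Ew1 subrr|rewrite addrC subrK].
Qed.

(* A map killing [ker p] factors through [t_S M], on which every map to [Sm] vanishes. *)
Lemma proj_cover_ker_XS (Sm : lmodType R) (psi : {linear P -> Sm}) :
  XS S Sm -> (forall w, p w = 0 -> psi w = 0) -> forall x, psi x = 0.
Proof.
case: pc => _ _ imp _ XSm Om.
pose pre (m : M) := epsilon (inhabits (0 : P)) (fun y => p y = m).
pose psi' (m : M) := psi (pre m).
have psi'E y : psi' (p y) = psi y.
  have ppre : p (pre (p y)) = p y by apply: (epsilon_spec _ (fun z => p z = p y)); exists y.
  have : psi (pre (p y) - y) = 0 by apply: Om; rewrite linearB ppre subrr.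
  by rewrite linearB => /eqP; rewrite subr_eq0 => /eqP.
have psi'_TS (T : lmodType R) (f : {linear T -> M}) y : TS S T -> psi' (f y) = 0.
  move=> TT; have fim y' : exists x, p x = f y'.
    by apply/imp; apply: (tS_image (A := fun _ => True)) TT _.
  have psi'fP a u v : psi' (f (a *: u + v)) = a *: psi' (f u) + psi' (f v).
    have [[xu Eu] [xv Ev]] := (fim u, fim v).
    by rewrite linearP -Eu -Ev -linearP !psi'E linearP.
  exact: (proj2 TT) Sm XSm (mklinear psi'fP) y.
pose B (m : M) := exists y, p y = m /\ psi y = 0.
have sB : submodule B.
  split; first by exists 0; rewrite !linear0.
  move=> a _ _ [y1 [<- E1]] [y2 [<- E2]]; exists (a *: y1 + y2).
  by rewrite !linearP E1 E2 scaler0 addr0.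
have tSB m : tS S (fun _ : M => True) m -> B m.
  move=> Hm; apply: Hm => // T f TT _ y.
  have [x2 Ex2] := proj2 (imp _) (tS_image (A := fun _ => True) (f := f) y TT (fun _ => I)).
  by exists x2; split=> //; rewrite -psi'E Ex2; apply: psi'_TS.
move=> x; have [y [Ey Py]] := tSB (p x) (proj1 (imp (p x)) (ex_intro _ x erefl)).
have : psi (x - y) = 0 by apply: Om; rewrite linearB Ey subrr.
by rewrite linearB Py subr0.
Qed.

Lemma proj_cover_TS : TS S P.
Proof.
split; first by case: pc.
move=> X XX phi x; apply: NNPP => /eqP nz.
have [Sm [psi [x1 [SSm psix1]]]] := XS_nonzero_map_simple XX nz.
have Om := proj_cover_ker_simple (simpleS SSm) psix1.
by move/eqP: psix1; apply; apply: proj_cover_ker_XS (XS_mem SSm) Om x1.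
Qed.

Lemma tS_TS (T : lmodType R) : TS S T -> forall x, tS S (fun _ : T => True) x.
Proof. by move=> TT x; apply: (tS_image (f := idfun)). Qed.

(* [ker p] is superfluous, so it lies in every maximal submodule of [P = t_S P]. *)
Lemma proj_cover_ker_rad x : p x = 0 -> Defs.rad (tS S (fun _ : P => True)) x.
Proof.
have TP := proj_cover_TS; case: pc => _ _ _ sup px.
split=> [|L [sL _ nTL maxL]]; first exact: tS_TS.
apply: NNPP => nLx.
have sLK := submod_addsub sL (submod_ker p).
case: (maxL _ sLK (addsubl (submod_ker p)) (fun u _ => tS_TS TP u)) => [EL|ET].
  by apply: nLx; apply/EL; apply: addsubr => //; apply: submod0.
apply: nTL => u _; apply: (sup _ sL) => y.
have [a [b [La pb ->]]] := proj2 (ET y) (tS_TS TP y).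
by exists b => //; exists a => //; rewrite addrC.
Qed.

Lemma tS_iter_proj_cover_ker i x :
  tS_iter S (fun x : P => p x = 0) i x -> tS_iter S (fun _ : P => True) i.+1 x.
Proof.
elim: i x => [|i IH] x /=; first by apply: tS_mono; apply: proj_cover_ker_rad.
apply: tS_mono; apply: rad_mono; [exact: submod_tS_iter|exact: submod_tS|exact: IH].
Qed.

End Cover.

(* [P] is a direct summand of some [R^n]; the coordinate maps then carry
   [t_S (rad t_S)^i P] into [t_S (rad t_S)^i R]. *)
Lemma tS_iter_projective_eq0 (P : lmodType R) i :
  fin_gen P -> projective P -> mzero (tS_iter S (fun _ : R^o => True) i) ->
  mzero (tS_iter S (fun _ : P => True) i).
Proof.
move=> [s gen] prP Z x Hx; pose n := size s.
have combP a (u v : 'rV[R]_n) : \sum_(k < n) (a *: u + v) 0 k *: s`_k =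
    a *: \sum_(k < n) u 0 k *: s`_k + \sum_(k < n) v 0 k *: s`_k.
  rewrite scaler_sumr -big_split /=; apply: eq_bigr => k _.
  by rewrite !mxE scalerDl scalerA.
have [h hK] : exists h : {linear P -> 'rV[R]_n}, forall y, mklinear combP (h y) = y.
  apply: (prP _ _ (mklinear combP) idfun) => y.
  have [r [_ Er]] := gen y; exists (\row_(k < n) r`_k).
  by rewrite Er; apply: eq_bigr => k _; rewrite mxE.
rewrite -[x]hK; suff -> : h x = 0 by rewrite linear0.
apply/rowP => k; rewrite mxE.
have coordP a (u v : P) : ((h (a *: u + v)) 0 k : R^o) = a *: (h u 0 k : R^o) + h v 0 k.
  by rewrite linearP !mxE.
exact: Z (tS_iter_linear (g := mklinear coordP) (fun _ _ => I) Hx).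
Qed.

End ProjectiveCover.

Theorem lemma4p3 (R : nzRingType) (S : lmodType R -> Prop) (M : lmodType R) :
  left_artinian R ->
  (forall Sm, S Sm -> simple_module Sm) ->
  fin_gen M ->
  ~ mzero (tS S (fun _ : M => True)) ->
  forall (P : lmodType R) (p : {linear P -> M}),
    proj_cover (tS S (fun _ : M => True)) p ->
    exists a b : nat,
      [/\ is_llt S (fun _ : R^o => True) a,
          is_llt S (fun x : P => p x = 0) b &
          (b + 1 <= a)%N].
Proof.
move=> artR simpleS _ tSM_neq0 P p pc.
have [fgP prP imp _] := pc.
have vanishP i := @tS_iter_projective_eq0 R S P i fgP prP.
have [a [Za mina]] := ex_least_nat (tS_iter_regular_eq0 artR S).
have a_gt0 : (0 < a)%N.
  case: a Za mina => // Z0 _; case: tSM_neq0 => m /imp [x <-].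
  by rewrite (vanishP 0%N Z0 x (tS_TS (proj_cover_TS simpleS pc) x)) linear0.
have Zb : mzero (tS_iter S (fun x : P => p x = 0) a.-1).
  move=> x /(tS_iter_proj_cover_ker simpleS pc); rewrite prednK //.
  exact: vanishP.
have [b [Zb' minb]] :=
  ex_least_nat (ex_intro (fun n => mzero (tS_iter S (fun x : P => p x = 0) n)) _ Zb).
exists a, b; split=> //; rewrite addn1.
by case: (ltnP b a) => // ab; case: (minb a.-1); first lia.
Qed.
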